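(* Let $\lambda$ be a dominant integral weight of $\mathfrak{sl}_{r+1}$ and let $b\in\mathcal{B}(\lambda+\rho)$. Let $\psi_{\mathbf i}(b)=(a_{i,j})_{1\le j\le i\le r}$ be the BZL path of $b$ with respect to the long word $\mathbf i=(1,2,1,3,2,1,\dots,r,r-1,\dots,2,1)$, written in triangular form, and let $\mathbf a(b)=(\mathbf a_{i,j})_{1\le i\le j\le r}$ be the tableau data of $b$. Then for all $1\le j\le i\le r$, \[ a_{i,j}=\mathbf a_{i-j+1,\,i}, \] i.e. $a_{i,j}$ equals the number of entries equal to $i+1$ lying in rows $1$ through $i-j+1$ of $b$.
   Context: Fix $r\ge1$ and $\mathfrak g=\mathfrak{sl}_{r+1}$ with index set $I=\{1,\dots,r\}$, simple roots $\alpha_1,\dots,\alpha_r$, fundamental weights $\omega_1,\dots,\omega_r$, positive roots $\Phi^+$, $N=|\Phi^+|=r(r+1)/2$, and $\rho=\sum_i\omega_i$. For a dominant integral weight $\mu=\sum_i m_i\omega_i$, the crystal $\mathcal B(\mu)$ is identified (Kashiwara–Nakashima) with the set of semistandard Young tableaux with entries in $\{1,\dots,r+1\}$ of the shape having $m_i$ columns of height $i$. An entry equal to $k$ is called a $k$-box (of color $k$). A tableau is identified with the tensor product $b_1\otimes\cdots\otimes b_m$ of its entries read column by column from the rightmost column to the leftmost, each column from top to bottom. The Kashiwara operators $\tilde e_i,\tilde f_i$ act by the signature rule: for each factor $b_k$ (in order) write $-$ if $b_k=i+1$, $+$ if $b_k=i$, and nothing otherwise; repeatedly cancel adjacent pairs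 $+-$ (a $+$ immediately followed by a $-$); then $\tilde e_i$ changes the factor corresponding to the rightmost remaining $-$ from $i+1$ to $i$ (and $\tilde e_ib=0$ if no $-$ remains), and $\tilde f_i$ changes the factor corresponding to the leftmost remaining $+$ from $i$ to $i+1$ (and $\tilde f_ib=0$ if no $+$ remains). The weight of a tableau is $\sum_k \epsilon_{c_k}$ restricted to $\mathfrak{sl}_{r+1}$, where $c_k$ runs over its entries and $\epsilon_c$ are the standard weights. Fix the long word $\mathbf i=(i_1,\dots,i_N)=(1,2,1,3,2,1,\dots,r,r-1,\dots,2,1)$ of the longest Weyl group element. The BZL path $\psi_{\mathbf i}(b)=(a_1,\dots,a_N)$ is defined inductively: $a_k$ is the maximal integer such that $\tilde e_{i_k}^{a_k}\tilde e_{i_{k-1}}^{a_{k-1}}\cdots\tilde e_{i_1}^{a_1}b\ne0$. It is written in triangular form $(a_{1,1};a_{2,1},a_{2,2};\dots;a_{r,1},\dots,a_{r,r})$, so $a_{i,j}=a_{i(i-1)/2+j}$ and corresponds to the letter $i_{i(i-1)/2+j}=i-j+1$. For a tableau $b\in\mathcal B(\lambda+\rho)$ and $1\le i\le j\le r$, $\mathbf a_{i,j}$ denotes the number of $(j+1)$-boxes in rows $1$ through $i$ of $b$, and $\mathbf a(b)=(\mathbf a_{1,1},\dots,\mathbf a_{1,r};\mathbf a_{2,2},\dots,\mathbf a_{2,r};\dots;\mathbf a_{r,r})$. *)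

From mathcomp Require Import all_boot.
Set Implicit Arguments. Unset Strict Implicit. Unset Printing Implicit Defensive.

(** Tableaux are given as lists of rows (top row first), entries are nats in
    {1,...,r+1}.  A dominant weight lambda = sum_k l_k omega_k of sl_{r+1} is
    given by its coefficient list l (size r); lambda+rho has m_k = l_k + 1
    columns of height k. *)

(* length of row k (0-indexed) of the shape of lambda+rho:
   number of columns of height > k *)
Definition row_len (l : seq nat) (k : nat) : nat :=
  \sum_(k <= p < size l) (nth 0 l p).+1.

Definition row (t : seq (seq nat)) (k : nat) : seq nat := nth [::] t k.

Definition is_ssyt (r : nat) (l : seq nat) (t : seq (seq nat)) : Prop :=
  [/\ size l = r, size t = r,
      (forall k, k < r -> size (row t k) = row_len l k) &
      [/\ (forall k, k < r -> size (row t k) = row_len l k),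
      (forall k x, k < r -> x \in row t k -> 1 <= x <= r.+1),
      (forall k, k < r -> sorted leq (row t k)) &
      (forall k c, k.+1 < r -> c < size (row t k.+1) ->
         nth 0 (row t k) c < nth 0 (row t k.+1) c)]].

Definition reading (t : seq (seq nat)) : seq nat :=
  flatten [seq [seq nth 0 (row t k) c | k <- iota 0 (size t) & c < size (row t k)]
          | c <- rev (iota 0 (size (row t 0)))].

(** Signature rule. A signature is a list of (position, sign), sign true = '+'. *)
Definition signature (i : nat) (w : seq nat) : seq (nat * bool) :=
  [seq (k, nth 0 w k == i) | k <- iota 0 (size w) &
       (nth 0 w k == i) || (nth 0 w k == i.+1)].

Fixpoint cancel_once (s : seq (nat * bool)) : seq (nat * bool) :=
  match s with
  | (p, true) :: (q, false) :: s' => s'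
  | x :: s' => x :: cancel_once s'
  | [::] => [::]
  end.

Definition reduced_signature (i : nat) (w : seq nat) : seq (nat * bool) :=
  iter (size w) cancel_once (signature i w).

(* Kashiwara operator e_i on words; None stands for 0 *)
Definition kashiwara_e (i : nat) (w : seq nat) : option (seq nat) :=
  let minus := [seq x.1 | x <- reduced_signature i w & ~~ x.2] in
  match minus with
  | [::] => None
  | _ => Some (set_nth 0 w (last 0 minus) i)
  end.

Definition e_iter (i a : nat) (w : seq nat) : option (seq nat) :=
  iter a (fun o => obind (kashiwara_e i) o) (Some w).

(* maximal a with e_i^a w <> 0 (such a is at most the number of letters) *)
Definition e_max (i : nat) (w : seq nat) : nat :=
  \max_(a < (size w).+1 | e_iter i a w != None) (a : nat).

Definition long_word (r : nat) : seq nat :=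
  flatten [seq rev (iota 1 i) | i <- iota 1 r].

Fixpoint bzl_aux (ws : seq nat) (w : seq nat) : seq nat :=
  match ws with
  | [::] => [::]
  | i :: ws' =>
      let a := e_max i w in
      a :: bzl_aux ws' (odflt w (e_iter i a w))
  end.

Definition bzl (r : nat) (w : seq nat) : seq nat := bzl_aux (long_word r) w.

(* a_{i,j} = a_{i(i-1)/2 + j} (1-indexed) *)
Definition bzl_entry (r : nat) (w : seq nat) (i j : nat) : nat :=
  nth 0 (bzl r w) ((i * i.-1)./2 + j).-1.

(* bold a_{i,j}: number of (j+1)-boxes in rows 1..i *)
Definition tab_data (t : seq (seq nat)) (i j : nat) : nat :=
  count (pred1 j.+1) (flatten (take i t)).

Example ex1 : long_word 3 = [:: 1; 2; 1; 3; 2; 1]. Proof. reflexivity. Qed.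
Example ex2 : reading [:: [:: 1; 1; 2]; [:: 2; 3]] = [:: 2; 1; 3; 1; 2]. Proof. reflexivity. Qed.

From mathcomp Require Import all_boot zify.
Set Implicit Arguments. Unset Strict Implicit. Unset Printing Implicit Defensive.

(* Call "stage i" the part i, i-1, ..., 1 of the long word. We show that just
   before e_k is applied in stage i, the current crystal element is the
   reading word of b with every entry x of row rho (rows counted from 0)
   relabelled by [stage_label i k]: rho+1 if x <= i; k+1 or rho+1 (according
   as rho < k or not) if x = i+1; x otherwise. Stage 1 starts from b itself.
   The key step [stage_step]: cut the reading word before the first column
   whose entry in row k-1 exceeds i. The right part contains no letter k and
   its letters k+1 are the (i+1)-boxes of rows 0..k-1; in the left part every
   column has signature (+) or (+,-). By the signature rule e_k can then be
   applied exactly bold a_{k,i} times, turning those letters k+1 into k, which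
   is the relabelling [stage_label i (k-1)]; [stage_label i 0] is the start of
   stage i+1. So the BZL path lists bold a_{i,i}, ..., bold a_{1,i} in stage
   i, and the theorem is the triangular indexing of this list. *)

Definition signs (k : nat) (w : seq nat) : seq bool :=
  [seq x == k | x <- w & (x == k) || (x == k.+1)].

Lemma signs_cat k u v : signs k (u ++ v) = signs k u ++ signs k v.
Proof. by rewrite /signs filter_cat map_cat. Qed.

Lemma signs_flatten k ws : signs k (flatten ws) = flatten [seq signs k w | w <- ws].
Proof. by elim: ws => //= w ws IH; rewrite signs_cat IH. Qed.

(* A sign sequence is [paired] when it is a concatenation of blocks (+) and
   (+,-), i.e. every '-' immediately follows a '+' that is not yet paired.
   Such signatures reduce to all '+' under the signature rule. *)
Fixpoint paired (bs : seq bool) : bool :=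
  match bs with
  | [::] => true
  | false :: _ => false
  | true :: false :: bs' => paired bs'
  | true :: bs' => paired bs'
  end.

Lemma paired_cons bs : paired bs -> paired (true :: bs).
Proof. by case: bs => [|[] bs]. Qed.

Lemma paired_cat bs cs : paired bs -> paired cs -> paired (bs ++ cs).
Proof.
elim: {bs}(size bs) {-2}bs (leqnn (size bs)) => [|n IH] [|[] bs] //= Hn.
case: bs Hn => [|[] bs] Hn Hbs Hcs /=; first exact: paired_cons.
- exact: (IH (true :: bs)).
- exact: IH (ltnW Hn) Hbs Hcs.
Qed.

Lemma paired_flatten bss : all paired bss -> paired (flatten bss).
Proof. by elim: bss => //= bs bss IH /andP[Hbs Hbss]; apply: paired_cat (IH Hbss). Qed.

Lemma signature_signs k w : map snd (signature k w) = signs k w.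
Proof.
rewrite /signature /signs -map_comp -[in RHS](mkseq_nth 0 w) /mkseq.
by rewrite filter_map -map_comp.
Qed.

Definition shift_pos (m : nat) (s : seq (nat * bool)) : seq (nat * bool) :=
  [seq (x.1 + m, x.2) | x <- s].

Lemma signature_cat k u v :
  signature k (u ++ v) = signature k u ++ shift_pos (size u) (signature k v).
Proof.
rewrite /signature size_cat iotaD add0n filter_cat map_cat; congr (_ ++ _).
  have Eu : {in iota 0 (size u), nth 0 (u ++ v) =1 nth 0 u}.
    by move=> x; rewrite mem_iota add0n => /andP[_ Hx]; rewrite nth_cat Hx.
  rewrite (eq_in_filter (a2 := fun n => (nth 0 u n == k) || (nth 0 u n == k.+1))).
    by apply/eq_in_map => x; rewrite mem_filter => /andP[_ /Eu ->].
  by move=> x /Eu ->.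
have Ev x : nth 0 (u ++ v) (size u + x) = nth 0 v x.
  by rewrite nth_cat ltnNge leq_addr /= addKn.
rewrite -(addn0 (size u)) iotaDl addn0 filter_map -!map_comp /shift_pos -map_comp.
by rewrite (eq_filter (a2 := fun x => (nth 0 v x == k) || (nth 0 v x == k.+1))) => [|x /=];
  [apply: eq_map => x /=; rewrite Ev addnC | rewrite Ev].
Qed.

Lemma size_signature k w : size (signature k w) <= size w.
Proof.
by rewrite /signature size_map size_filter (leq_trans (count_size _ _)) // size_iota.
Qed.

Definition is_minus (x : nat * bool) : bool := ~~ x.2.

Lemma signature_all_minus k u : k \notin u -> all is_minus (signature k u).
Proof.
move=> kNu; rewrite -(all_map snd (fun b => ~~ b)) signature_signs.
apply/allP => b /mapP[x]; rewrite mem_filter => /andP[_ xu] ->.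
by apply: contraNN kNu => /eqP <-.
Qed.

Lemma cancel_once_minus_prefix s1 s2 :
  all is_minus s1 -> cancel_once (s1 ++ s2) = s1 ++ cancel_once s2.
Proof. by elim: s1 => [|[p [] s1] IH] //= /IH ->. Qed.

Lemma cancel_once_paired s : paired (map snd s) ->
  paired (map snd (cancel_once s)) /\
  count is_minus (cancel_once s) = (count is_minus s).-1.
Proof.
elim: s => [|[p [] [|[q [] s]]] IH] //= Hs.
have [Hp Hc] := IH Hs.
by split; [apply: paired_cons | rewrite /is_minus /= Hc].
Qed.

Lemma iter_cancel_minus m s1 s2 : all is_minus s1 -> paired (map snd s2) ->
  count is_minus s2 <= m -> filter is_minus (iter m cancel_once (s1 ++ s2)) = s1.
Proof.
move=> Hs1; elim: m s2 => [|m IH] s2 Hs2 Hm.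
  move: Hm; rewrite leqn0 -size_filter size_eq0 filter_cat => /eqP ->.
  by rewrite (all_filterP Hs1) cats0.
rewrite iterSr cancel_once_minus_prefix //.
have [Hp Hc] := cancel_once_paired Hs2.
by apply: IH => //; rewrite Hc; lia.
Qed.

Lemma reduced_signature_minus k u v : k \notin u -> paired (signs k v) ->
  filter is_minus (reduced_signature k (u ++ v)) = signature k u.
Proof.
move=> kNu Hv; rewrite /reduced_signature signature_cat.
apply: iter_cancel_minus; first exact: signature_all_minus.
  by rewrite /shift_pos -map_comp signature_signs.
apply: leq_trans (count_size _ _) _; rewrite size_map.
by apply: leq_trans (size_signature k v) _; rewrite size_cat leq_addl.
Qed.

Lemma set_nth_mid T (x0 : T) u x v y :
  set_nth x0 (u ++ x :: v) (size u) y = u ++ y :: v.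
Proof. by elim: u => //= z u ->. Qed.

Lemma kashiwara_e_lower k u v : k \notin u -> paired (signs k v) ->
  kashiwara_e k (u ++ k.+1 :: v) = Some (u ++ k :: v).
Proof.
move=> kNu Hv; rewrite /kashiwara_e -!cat_rcons.
have kNu' : k \notin rcons u k.+1.
  by rewrite mem_rcons inE negb_or (ltn_eqF (ltnSn k)) kNu.
have -> : [seq x.1 | x <- reduced_signature k (rcons u k.+1 ++ v) & ~~ x.2] =
          map fst (rcons (signature k u) (size u, false)).
  rewrite -[filter _ _]/(filter is_minus _) reduced_signature_minus //.
  rewrite -cats1 signature_cat /= -cats1 /shift_pos /signature /= eqxx orbT /=.
  by rewrite (gtn_eqF (ltnSn k)).
rewrite map_rcons; case: (map fst _) => [|? ?]; rewrite /= ?last_rcons;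
  by rewrite !cat_rcons set_nth_mid.
Qed.

Lemma kashiwara_e_paired k v : paired (signs k v) -> kashiwara_e k v = None.
Proof.
move=> Hv; rewrite /kashiwara_e -[filter _ _]/(filter is_minus _).
by rewrite -[v]cat0s reduced_signature_minus.
Qed.

Lemma e_iter_from_none i a :
  iter a (fun o => obind (kashiwara_e i) o) None = None.
Proof. by elim: a => //= a ->. Qed.

Lemma e_iterS i a w :
  e_iter i a.+1 w = if kashiwara_e i w is Some w' then e_iter i a w' else None.
Proof. by rewrite /e_iter iterSr /=; case: kashiwara_e => //; rewrite e_iter_from_none. Qed.

Lemma e_max_eq i w p :
  e_iter i p w != None -> e_iter i p.+1 w = None -> p <= size w -> e_max i w = p.
Proof.
move=> Hp Hp1 Hpw; apply/eqP; rewrite eqn_leq; apply/andP; split.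
  apply/bigmax_leqP => a /= Ha; rewrite leqNgt; apply: contra Ha => Hpa.
  by move: Hp1; rewrite /e_iter -(subnK Hpa) iterD => ->; rewrite e_iter_from_none.
exact: (@leq_bigmax_cond _ _ (fun a : 'I_(size w).+1 => nat_of_ord a)
  (@Ordinal (size w).+1 p Hpw)).
Qed.

Definition lower (k x : nat) : nat := if x == k.+1 then k else x.

Lemma e_iter_lower k w1 w2 : k \notin w1 -> paired (signs k w2) ->
  e_iter k (count (pred1 k.+1) w1) (w1 ++ w2) = Some (map (lower k) w1 ++ w2) /\
  e_iter k (count (pred1 k.+1) w1).+1 (w1 ++ w2) = None.
Proof.
elim/last_ind: w1 w2 => [|w1 x IH] w2.
  by move=> _ Hw2; rewrite e_iterS kashiwara_e_paired.
rewrite mem_rcons inE negb_or eq_sym => /andP[xNk kNw1] Hw2.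
rewrite -cats1 count_cat map_cat -!catA !cat1s.
have [-> | xNk1] := eqVneq x k.+1.
  have Hk : paired (signs k (k :: w2)).
    have -> : signs k (k :: w2) = true :: signs k w2.
      by rewrite /signs /= eqxx /= eqxx.
    exact: paired_cons.
  have -> : lower k k.+1 = k by rewrite /lower eqxx.
  by rewrite /= eqxx addn1 !e_iterS kashiwara_e_lower //; apply: IH.
have Hx : paired (signs k (x :: w2)).
  by rewrite /signs /= (negbTE xNk) (negbTE xNk1).
have -> : lower k x = x by rewrite /lower (negbTE xNk1).
have -> : count (pred1 k.+1) [:: x] = 0 by rewrite /= (negbTE xNk1).
by rewrite addn0; apply: IH.
Qed.

(* The properties of a semistandard tableau (given by its rows) used below,
   stated for all row indices since rows past the last one are empty. *)
Definition semistandard (t : seq (seq nat)) : Prop :=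
  [/\ forall rho, size (row t rho.+1) <= size (row t rho),
      forall rho, sorted leq (row t rho),
      forall rho c, c < size (row t rho.+1) ->
        nth 0 (row t rho) c < nth 0 (row t rho.+1) c
    & forall c, c < size (row t 0) -> 0 < nth 0 (row t 0) c].

Lemma is_ssyt_semistandard r l t : is_ssyt r l t -> semistandard t.
Proof.
case=> _ size_t size_rows [_ entries_in sorted_rows col_strict].
have row_len_mono k : row_len l k.+1 <= row_len l k.
  rewrite /row_len; have [lt_kl | le_lk] := ltnP k (size l).
    by rewrite (big_ltn lt_kl) leq_addl.
  by rewrite !big_geq // (leq_trans le_lk).
have row_nil k : r <= k -> row t k = [::].
  by move=> le_rk; rewrite /row nth_default ?size_t.
split=> [rho | rho | rho c | c c_lt].
- have [lt_rho1 | le_rrho1] := ltnP rho.+1 r; last by rewrite row_nil.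
  by rewrite !size_rows ?row_len_mono // ltnW.
- by have [/sorted_rows | /row_nil ->] := ltnP rho r.
- have [lt_rho1 | /row_nil ->] := ltnP rho.+1 r; last by [].
  exact: col_strict.
have r_gt0 : 0 < r by rewrite lt0n; apply: contraTneq c_lt => r0; rewrite row_nil ?r0.
by case/andP: (entries_in 0 _ r_gt0 (mem_nth 0 c_lt)).
Qed.

Section SemistandardFacts.
Variable t : seq (seq nat).
Hypothesis Ht : semistandard t.

Lemma size_row_mono rho rho' : rho <= rho' -> size (row t rho') <= size (row t rho).
Proof.
case: Ht => Hsize _ _ _ /subnK <-; elim: (rho' - rho) => // d IH.
by rewrite addSn (leq_trans (Hsize _)).
Qed.

Lemma column_increase rho rho' c : rho <= rho' -> c < size (row t rho') ->
  nth 0 (row t rho) c + (rho' - rho) <= nth 0 (row t rho') c.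
Proof.
case: Ht => _ _ Hcol _ /subnK <-; rewrite addnK.
elim: (rho' - rho) => [|d IH] Hc; first by rewrite addn0.
have Hc' : c < size (row t (d + rho)).
  by apply: leq_trans Hc _; apply: size_row_mono; rewrite addSn.
have := IH Hc'; have := Hcol (d + rho) c; rewrite -addSn => /(_ Hc); lia.
Qed.

Lemma entry_gt_row rho c : c < size (row t rho) -> rho < nth 0 (row t rho) c.
Proof.
move=> Hc; have := column_increase (leq0n rho) Hc.
have Hc0 : c < size (row t 0) := leq_trans Hc (size_row_mono (leq0n rho)).
by case: Ht => _ _ _ /(_ c Hc0); lia.
Qed.

Lemma row_nondecreasing rho c c' : c <= c' -> c' < size (row t rho) ->
  nth 0 (row t rho) c <= nth 0 (row t rho) c'.
Proof.
case: Ht => _ Hsorted _ _ Hcc' Hc'.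
apply: (sorted_leq_nth leq_trans leqnn 0 (Hsorted rho)) => //.
by rewrite inE (leq_ltn_trans Hcc').
Qed.

Definition cut (i a : nat) : nat := find (fun x => i < x) (row t a).

Lemma cut_le_size i a : cut i a <= size (row t a).
Proof. exact: find_size. Qed.

Lemma entry_left_of_cut i a rho c : c < cut i a -> rho <= a ->
  nth 0 (row t rho) c <= i.
Proof.
move=> Hc Hrho; have Hca : c < size (row t a) := leq_trans Hc (cut_le_size i a).
have := column_increase Hrho Hca.
have : (i < nth 0 (row t a) c) = false by apply: (before_find 0 Hc).
lia.
Qed.

Lemma entry_right_of_cut i a rho c : cut i a <= c -> a <= rho ->
  c < size (row t rho) -> i.+1 + (rho - a) <= nth 0 (row t rho) c.
Proof.
move=> Hc Hrho Hcrho.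
have Hca : c < size (row t a) := leq_trans Hcrho (size_row_mono Hrho).
have Hcut : i < nth 0 (row t a) (cut i a).
  by apply: (nth_find 0); rewrite has_find (leq_ltn_trans Hc Hca).
have := row_nondecreasing Hc Hca; have := column_increase Hrho Hcrho; lia.
Qed.

End SemistandardFacts.

(* Cells are pairs (column, row); [relabel t g cs] is the word obtained by
   reading the columns cs top to bottom and writing g rho x for an entry x of
   row rho. *)
Definition entry (t : seq (seq nat)) (p : nat * nat) : nat := nth 0 (row t p.2) p.1.

Definition column_cells (t : seq (seq nat)) (c : nat) : seq (nat * nat) :=
  [seq (c, rho) | rho <- iota 0 (size t) & c < size (row t rho)].

Definition cells (t : seq (seq nat)) (cs : seq nat) : seq (nat * nat) :=
  flatten [seq column_cells t c | c <- cs].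

Definition relabel (t : seq (seq nat)) (g : nat -> nat -> nat) (cs : seq nat) :
  seq nat :=
  [seq g p.2 (entry t p) | p <- cells t cs].

Definition columns (t : seq (seq nat)) : seq nat := rev (iota 0 (size (row t 0))).

Lemma reading_relabel t : reading t = relabel t (fun _ x => x) (columns t).
Proof.
rewrite /reading /relabel /cells map_flatten -map_comp; congr flatten.
by apply: eq_map => c; rewrite /column_cells /= -map_comp.
Qed.

Lemma cells_cat t cs cs' : cells t (cs ++ cs') = cells t cs ++ cells t cs'.
Proof. by rewrite /cells map_cat flatten_cat. Qed.

Lemma mem_cells t cs p : p \in cells t cs ->
  [/\ p.1 \in cs, p.2 < size t & p.1 < size (row t p.2)].
Proof.
case/flattenP => _ /mapP[c c_in ->] /mapP[rho].
by rewrite mem_filter mem_iota add0n => /andP[Hc /andP[_ Hrho]] ->.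
Qed.

Lemma count_as_sum T (a : pred T) s : count a s = \sum_(x <- s) (a x : nat).
Proof. by rewrite -sumn_count sumnE big_map. Qed.

Lemma count_cells t (q : nat -> nat -> bool) :
  (forall rho, size (row t rho) <= size (row t 0)) ->
  count (fun p => q p.2 (entry t p)) (cells t (columns t)) =
  \sum_(rho <- iota 0 (size t)) count (q rho) (row t rho).
Proof.
move=> Hsize; rewrite /cells count_flatten sumnE !big_map big_rev.
under eq_bigr => c _ do rewrite /column_cells count_map count_filter count_as_sum.
rewrite exchange_big; apply: eq_bigr => rho _ /=.
rewrite -(subnKC (Hsize rho)) iotaD big_cat /= add0n.
rewrite (@big1_seq _ _ _ _ (iota (size (row t rho)) _)) ?addn0; last first.
  by move=> c /andP[_]; rewrite mem_iota => /andP[Hc _]; rewrite ltnNge Hc andbF.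
rewrite count_as_sum [in RHS](big_nth 0) /index_iota subn0.
by apply: eq_big_seq => c; rewrite mem_iota add0n => /andP[_ ->]; rewrite andbT.
Qed.

Definition stage_label (i k rho x : nat) : nat :=
  if x <= i then rho.+1
  else if x == i.+1 then (if rho < k then k.+1 else rho.+1) else x.

Lemma stage_label_right i k rho x : 0 < k -> k <= i -> rho < x ->
  (k.-1 <= rho -> i.+1 + (rho - k.-1) <= x) ->
  [/\ stage_label i k rho x != k,
      lower k (stage_label i k rho x) = stage_label i k.-1 rho x &
      (stage_label i k rho x == k.+1) = (x == i.+1) && (rho < k)].
Proof.
move=> k_gt0 k_le_i x_gt Hx; rewrite /stage_label /lower.
by case: (leqP k.-1 rho) => [/[dup]/Hx|] ? *; repeat case: ifP; split; lia.
Qed.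

Lemma stage_label_left i k rho x : (rho < k -> x <= i) ->
  stage_label i k rho x = stage_label i k.-1 rho x /\
  (x == i.+1) && (rho < k) = false.
Proof.
move=> Hx; rewrite /stage_label.
by case: (ltnP rho k) => [/[dup]/Hx|] ? *; repeat case: ifP; split; lia.
Qed.

Lemma stage_label_left_column i k rho x : 0 < k -> k <= i -> rho < x ->
  (rho <= k.-1 -> x <= i) ->
  ((stage_label i k rho x == k) || (stage_label i k rho x == k.+1) ->
     rho = k.-1 \/ rho = k /\ stage_label i k rho x != k) /\
  (rho = k.-1 -> stage_label i k rho x = k).
Proof.
move=> k_gt0 k_le_i x_gt Hx; rewrite /stage_label.
by case: (leqP rho k.-1) => [/[dup]/Hx|] ? *; repeat case: ifP; split; lia.
Qed.

(* The signs of a column left of the cut: among the rows selected by Q, row a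
   carries a '+' and the only other possible row, a+1, carries a '-'. *)
Lemma paired_window (Q : pred nat) (h : nat -> bool) a n : a < n -> Q a -> h a ->
  (forall rho, Q rho -> rho = a \/ rho = a.+1 /\ ~~ h rho) ->
  paired [seq h rho | rho <- filter Q (iota 0 n)].
Proof.
move=> lt_an Qa ha HQ.
have filter0 s : {in s, forall rho, (rho < a) || (a.+1 < rho)} -> filter Q s = [::].
  move=> Hs; apply/eqP; rewrite -(negbK (_ == _)) -has_filter; apply/hasPn.
  by move=> rho /Hs Hrho; apply/negP => /HQ; lia.
rewrite -(subnKC lt_an) addSnnS iotaD filter_cat filter0 => [|rho]; last first.
  by rewrite mem_iota; lia.
case: (n - a.+1) => [|d] /=; rewrite Qa /= ha; first by [].
rewrite filter0 => [|rho]; last by rewrite mem_iota; lia.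
rewrite add0n; case: ifP => //= /HQ[|[_ /negbTE ->]] //; lia.
Qed.

Lemma tab_data_rows t k j : k <= size t ->
  tab_data t k j = \sum_(rho <- iota 0 k) count (pred1 j.+1) (row t rho).
Proof.
move=> k_le; rewrite /tab_data count_flatten sumnE big_map.
rewrite -[t in take _ t](mkseq_nth [::]) /mkseq -map_take take_iota (minn_idPl k_le).
by rewrite big_map.
Qed.

Section StageStep.
Variables (t : seq (seq nat)) (i k : nat).
Hypotheses (Ht : semistandard t) (k_gt0 : 0 < k) (k_le_i : k <= i).
Hypothesis k_le_size : k <= size t.

Local Notation C := (cut t i k.-1).
Local Notation right_cols := (rev (iota C (size (row t 0) - C))).
Local Notation left_cols := (rev (iota 0 C)).
Local Notation label := (stage_label i k).

Lemma columns_split : columns t = right_cols ++ left_cols.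
Proof.
have HC : C <= size (row t 0).
  exact: leq_trans (cut_le_size t i k.-1) (size_row_mono Ht (leq0n _)).
by rewrite /columns -rev_cat -{2}(add0n C) -iotaD subnKC.
Qed.

Lemma right_cell_labels p : p \in cells t right_cols ->
  [/\ label p.2 (entry t p) != k,
      lower k (label p.2 (entry t p)) = stage_label i k.-1 p.2 (entry t p) &
      (label p.2 (entry t p) == k.+1) = (entry t p == i.+1) && (p.2 < k)].
Proof.
case/mem_cells; rewrite mem_rev mem_iota => /andP[HCc _] _ Hp.
apply: stage_label_right => //; first exact: entry_gt_row.
by move=> Hrho; apply: entry_right_of_cut.
Qed.

Lemma left_cell_labels p : p \in cells t left_cols ->
  label p.2 (entry t p) = stage_label i k.-1 p.2 (entry t p) /\
  (entry t p == i.+1) && (p.2 < k) = false.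
Proof.
case/mem_cells; rewrite mem_rev mem_iota add0n => /andP[_ HcC] _ Hp.
apply: stage_label_left => Hrho; apply: (entry_left_of_cut Ht HcC).
by rewrite -ltnS prednK.
Qed.

Lemma right_word_no_k : k \notin relabel t label right_cols.
Proof. by apply/mapP => -[p /right_cell_labels[+ _ _] Ep]; rewrite -Ep eqxx. Qed.

Lemma right_word_count :
  count (pred1 k.+1) (relabel t label right_cols) = tab_data t k i.
Proof.
pose q rho x := (x == i.+1) && (rho < k).
rewrite /relabel count_map (eq_in_count (a2 := fun p => q p.2 (entry t p))); last first.
  by move=> p /right_cell_labels[_ _ E]; exact: E.
have -> : count (fun p => q p.2 (entry t p)) (cells t right_cols) =
          count (fun p => q p.2 (entry t p)) (cells t (columns t)).
  rewrite columns_split cells_cat count_cat [X in _ + X](eq_in_count (a2 := pred0)).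
    by rewrite count_pred0 addn0.
  by move=> p /left_cell_labels[_ E].
rewrite count_cells; last first.
  by move=> rho; apply: size_row_mono.
rewrite tab_data_rows // -(subnKC k_le_size) iotaD big_cat /= add0n.
rewrite [X in _ + X]big1_seq ?addn0 => [|rho /andP[_]]; last first.
  rewrite mem_iota => /andP[le_krho _].
  rewrite (eq_count (a2 := pred0)) ?count_pred0 // => x.
  by rewrite /q ltnNge le_krho andbF.
apply: eq_big_seq => rho; rewrite mem_iota add0n => /andP[_ lt_rhok].
by apply: eq_count => x; rewrite /q lt_rhok andbT.
Qed.

Lemma left_column_paired c : c < C ->
  paired (signs k [seq label p.2 (entry t p) | p <- column_cells t c]).
Proof.
move=> HcC; set y := fun rho => label rho (nth 0 (row t rho) c).
set Q := fun rho => (c < size (row t rho)) && ((y rho == k) || (y rho == k.+1)).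
have -> : signs k [seq label p.2 (entry t p) | p <- column_cells t c] =
          [seq y rho == k | rho <- filter Q (iota 0 (size t))].
  rewrite /signs /column_cells -map_comp filter_map -map_comp -filter_predI.
  by congr map; apply: eq_filter => rho; rewrite /Q /= andbC.
have Hc_k1 : c < size (row t k.-1) := leq_trans HcC (cut_le_size t i k.-1).
have labels rho : c < size (row t rho) ->
    ((y rho == k) || (y rho == k.+1) -> rho = k.-1 \/ rho = k /\ y rho != k) /\
    (rho = k.-1 -> y rho = k).
  move=> Hc; apply: stage_label_left_column => //; first exact: entry_gt_row.
  by move=> Hrho; apply: entry_left_of_cut HcC Hrho.
have y_k1 : y k.-1 = k by apply: (labels _ Hc_k1).2.
apply: (paired_window (a := k.-1)); first by rewrite prednK.
- by rewrite /Q Hc_k1 y_k1 eqxx.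
- by rewrite y_k1 eqxx.
by move=> rho /andP[/labels[Hrho _] /Hrho]; rewrite prednK.
Qed.

Lemma left_word_paired : paired (signs k (relabel t label left_cols)).
Proof.
rewrite /relabel /cells map_flatten signs_flatten; apply: paired_flatten.
apply/allP => _ /mapP[_ /mapP[_ /mapP[c c_in ->] ->] ->]; apply: left_column_paired.
by move: c_in; rewrite mem_rev mem_iota add0n => /andP[].
Qed.

Lemma stage_step :
  e_max k (relabel t label (columns t)) = tab_data t k i /\
  e_iter k (tab_data t k i) (relabel t label (columns t)) =
    Some (relabel t (stage_label i k.-1) (columns t)).
Proof.
rewrite columns_split /relabel !cells_cat !map_cat -!/(relabel _ _ _).
have [Hsome Hnone] := e_iter_lower right_word_no_k left_word_paired.
rewrite right_word_count in Hsome Hnone; split.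
  apply: e_max_eq; rewrite ?Hsome ?Hnone // -right_word_count size_cat.
  exact: leq_trans (count_size _ _) (leq_addr _ _).
rewrite Hsome; congr (Some (_ ++ _)); rewrite /relabel.
  by rewrite -map_comp; apply/eq_in_map => p /right_cell_labels[_ + _].
by apply/eq_in_map => p /left_cell_labels[+ _].
Qed.
End StageStep.

Lemma relabel_eq t g g' : semistandard t ->
  (forall rho x, rho < x -> g rho x = g' rho x) ->
  relabel t g (columns t) = relabel t g' (columns t).
Proof.
by move=> Ht Hg; apply/eq_in_map => p /mem_cells[_ _ /(entry_gt_row Ht) /Hg].
Qed.

Lemma stage_run t i ws : semistandard t -> i <= size t -> forall k, k <= i ->
  bzl_aux (rev (iota 1 k) ++ ws) (relabel t (stage_label i k) (columns t)) =
  [seq tab_data t k' i | k' <- rev (iota 1 k)] ++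
  bzl_aux ws (relabel t (stage_label i 0) (columns t)).
Proof.
move=> Ht le_i; elim=> [|k IH] le_k //.
have -> : rev (iota 1 k.+1) = k.+1 :: rev (iota 1 k).
  by rewrite -[k.+1]addn1 iotaD rev_cat /= addnC.
have [E1 E2] := stage_step Ht (ltn0Sn k) le_k (leq_trans le_k le_i).
by rewrite /= E1 E2 /= IH // ltnW.
Qed.

Lemma stage_label_next i rho x : rho < x ->
  stage_label i 0 rho x = stage_label i.+1 i.+1 rho x.
Proof. by rewrite /stage_label; repeat case: ifP; lia. Qed.

Lemma stage_label_first rho x : rho < x -> stage_label 1 1 rho x = x.
Proof. by rewrite /stage_label; repeat case: ifP; lia. Qed.

Lemma bzl_stages t m s : semistandard t -> 0 < s -> s + m <= (size t).+1 ->
  bzl_aux (flatten [seq rev (iota 1 i) | i <- iota s m])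
          (relabel t (stage_label s s) (columns t)) =
  flatten [seq [seq tab_data t k i | k <- rev (iota 1 i)] | i <- iota s m].
Proof.
move=> Ht; elim: m s => [|m IH] s s_gt0 le_sm //=.
rewrite stage_run //; last by lia.
by rewrite (relabel_eq Ht (@stage_label_next s)) IH //; lia.
Qed.

Lemma bzl_reading r l t : is_ssyt r l t ->
  bzl r (reading t) =
  flatten [seq [seq tab_data t k i | k <- rev (iota 1 i)] | i <- iota 1 r].
Proof.
move=> Hss; have Ht := is_ssyt_semistandard Hss.
have size_t : size t = r by case: Hss.
rewrite /bzl /long_word reading_relabel -(relabel_eq Ht stage_label_first).
by rewrite bzl_stages // add1n size_t.
Qed.

Lemma nth_stages (f : nat -> nat -> nat) r i j : 0 < j -> j <= i -> i <= r ->
  nth 0 (flatten [seq [seq f i k | k <- rev (iota 1 i)] | i <- iota 1 r])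
      ((i * i.-1)./2 + j).-1 = f i (i - j + 1).
Proof.
move=> j_gt0 le_ji le_ir.
have -> : iota 1 r = iota 1 i.-1 ++ i :: iota i.+1 (r - i).
  rewrite {1}(_ : r = i.-1 + (r - i).+1); last by lia.
  by rewrite iotaD /= add1n prednK //; lia.
set G := fun i' => [seq f i' k | k <- rev (iota 1 i')].
have size_front : size (flatten [seq G i' | i' <- iota 1 i.-1]) = (i * i.-1)./2.
  rewrite size_flatten /shape -map_comp (eq_map (g := id)) ?map_id => [|i']; last first.
    by rewrite /= size_map size_rev size_iota.
  have i_gt0 : 0 < i := leq_trans j_gt0 le_ji.
  rewrite -bin2 -bin2_sum /index_iota subn0 -[in RHS](prednK i_gt0) /=.
  by rewrite big_cons add0n sumnE.
have -> : ((i * i.-1)./2 + j).-1 = (i * i.-1)./2 + j.-1 by lia.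
rewrite map_cat flatten_cat nth_cat size_front ltnNge leq_addr /= addKn.
have lt_j1i : j.-1 < i by lia.
rewrite nth_cat /G size_map size_rev size_iota lt_j1i (nth_map 0) ?size_rev ?size_iota //.
rewrite nth_rev ?size_iota // nth_iota; last by lia.
by congr (f i); lia.
Qed.

Theorem mainTheorem1 (r : nat) (l : seq nat) (t : seq (seq nat)) :
  1 <= r -> is_ssyt r l t ->
  forall i j, 1 <= j -> j <= i -> i <= r ->
    bzl_entry r (reading t) i j = tab_data t (i - j + 1) i.
Proof.
move=> _ Hss i j j_gt0 le_ji le_ir.
by rewrite /bzl_entry (bzl_reading Hss) (nth_stages (fun i k => tab_data t k i)).
Qed.
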